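(* Let $T$ be a tree and let $S$ be a covering strategy for $T$ with $k$ robots (at prescribed starting vertices) of minimum length among all such covering strategies. If an edge $(x,y)$ of $T$ is traversed by at least two different robots in $S$, then all robots that traverse $(x,y)$ traverse it in the same direction (either all from $x$ to $y$, or all from $y$ to $x$).
   Context: A walk in $T$ is a sequence $W=(u_1,\dots,u_m)$ of vertices in which consecutive terms are equal or adjacent; it traverses edge $(x,y)$ from $x$ to $y$ when $u_i=x,u_{i+1}=y$ for some $i$. Its length is the number of indices $i$ with $u_i\neq u_{i+1}$. A strategy with $k$ robots is a $k$-tuple of walks, walk $i$ starting at robot $i$'s prescribed starting vertex; it is covering if every vertex of $T$ is in some walk; its length is the sum of the lengths of its walks. *)

From mathcomp Require Import all_boot.
Set Implicit Arguments. Unset Strict Implicit. Unset Printing Implicit Defensive.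

Definition simple_graph (V : finType) (e : rel V) : Prop :=
  symmetric e /\ irreflexive e.

Definition acyclic (V : finType) (e : rel V) : Prop :=
  forall c : seq V, 3 <= size c -> uniq c -> ~~ cycle e c.

Definition connected (V : finType) (e : rel V) : Prop :=
  forall x y : V, connect e x y.

Definition is_tree (V : finType) (e : rel V) : Prop :=
  [/\ simple_graph e, connected e & acyclic e].

Definition wstep (V : finType) (e : rel V) : rel V :=
  fun a b => (a == b) || e a b.

(* A walk is represented as its first vertex [s] followed by the sequence [p]
   of subsequent vertices, i.e. W = s :: p. *)
Definition is_walk (V : finType) (e : rel V) (s : V) (p : seq V) : bool :=
  path (wstep e) s p.

Definition wpairs (V : finType) (s : V) (p : seq V) : seq (V * V) :=
  zip (s :: p) p.

Definition wlength (V : finType) (s : V) (p : seq V) : nat :=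
  count (fun uv : V * V => uv.1 != uv.2) (wpairs s p).

Definition traverses (V : finType) (s : V) (p : seq V) (x y : V) : bool :=
  (x, y) \in wpairs s p.

Definition is_strategy (V : finType) (e : rel V) (k : nat)
  (st : 'I_k -> V) (W : 'I_k -> seq V) : Prop :=
  forall i, is_walk e (st i) (W i).

Definition covering (V : finType) (k : nat)
  (st : 'I_k -> V) (W : 'I_k -> seq V) : Prop :=
  forall v : V, exists i : 'I_k, v \in st i :: W i.

Definition slength (V : finType) (k : nat)
  (st : 'I_k -> V) (W : 'I_k -> seq V) : nat :=
  \sum_(i < k) wlength (st i) (W i).

Definition optimal_covering (V : finType) (e : rel V) (k : nat)
  (st : 'I_k -> V) (W : 'I_k -> seq V) : Prop :=
  [/\ is_strategy e st W, covering st W &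
      forall W' : 'I_k -> seq V, is_strategy e st W' -> covering st W' ->
        slength st W <= slength st W'].

(* If a robot [a] crosses the edge from [x] to [y] and another robot [b]
   crosses it from [y] to [x], let them exchange the remainders of their walks
   at the crossing: [a] stops at [x] and continues as [b] did after reaching
   [x], while [b] stops at [y] and continues as [a] did after reaching [y].
   Both are still walks, together they visit the same vertices, and two edge
   crossings have disappeared, contradicting minimality.  Hence opposite
   traversals of an edge come from a single robot, which is excluded once two
   different robots use the edge. *)

From mathcomp Require Import all_boot.
From mathcomp Require Import zify.
Set Implicit Arguments. Unset Strict Implicit. Unset Printing Implicit Defensive.

Section Walks.
Variables (V : finType) (e : rel V).

Lemma wpairs_cat (s : V) (q r : seq V) :
  wpairs s (q ++ r) = wpairs s q ++ wpairs (last s q) r.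
Proof. by elim: q s => [|c q IH] s //=; rewrite /wpairs /= -IH. Qed.

Lemma wlength_cat (s : V) (q r : seq V) :
  wlength s (q ++ r) = wlength s q + wlength (last s q) r.
Proof. by rewrite /wlength wpairs_cat count_cat. Qed.

Lemma wlength_cat_cons (s x y : V) (q r : seq V) : last s q = x ->
  wlength s (q ++ y :: r) = wlength s q + (x != y) + wlength y r.
Proof. by move=> lastq; rewrite wlength_cat lastq /wlength /= addnA. Qed.

Lemma is_walk_cat (s : V) (q r : seq V) :
  is_walk e s (q ++ r) = is_walk e s q && is_walk e (last s q) r.
Proof. exact: cat_path. Qed.

Lemma is_walk_cons (s c : V) (p : seq V) :
  is_walk e s (c :: p) = wstep e s c && is_walk e c p.
Proof. by []. Qed.

Lemma traverses_split (s x y : V) (p : seq V) : traverses s p x y ->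
  exists q r, p = q ++ y :: r /\ last s q = x.
Proof.
elim: p s => [|c p IH] s //.
rewrite /traverses /wpairs /= in_cons => /orP[/eqP[-> ->] | /IH[q [r [-> <-]]]].
  by exists [::], p.
by exists (c :: q), r.
Qed.

End Walks.

Lemma sum_pair (k : nat) (F : 'I_k -> nat) (a b : 'I_k) : a != b ->
  \sum_(i < k) F i = F a + F b + \sum_(i < k | (i != a) && (i != b)) F i.
Proof.
by move=> nab; rewrite (bigD1 a) //= (bigD1 b) 1?eq_sym //= addnA.
Qed.

Section Reroute.
Variables (V : finType) (k : nat) (st : 'I_k -> V) (W : 'I_k -> seq V).
Variables (a b : 'I_k) (pa pb : seq V).
Hypothesis nab : a != b.

Definition reroute (i : 'I_k) : seq V :=
  if i == a then pa else if i == b then pb else W i.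

Lemma reroute_a : reroute a = pa.
Proof. by rewrite /reroute eqxx. Qed.

Lemma reroute_b : reroute b = pb.
Proof. by rewrite /reroute eq_sym (negbTE nab) eqxx. Qed.

Lemma reroute_other (i : 'I_k) : i != a -> i != b -> reroute i = W i.
Proof. by rewrite /reroute => /negbTE-> /negbTE->. Qed.

Lemma reroute_strategy (e : rel V) : is_strategy e st W ->
  is_walk e (st a) pa -> is_walk e (st b) pb -> is_strategy e st reroute.
Proof.
move=> walks walka walkb i.
have [->|nia] := eqVneq i a; first by rewrite reroute_a.
have [->|nib] := eqVneq i b; first by rewrite reroute_b.
by rewrite reroute_other.
Qed.

Lemma reroute_covering :
  {subset (st a :: W a) ++ (st b :: W b) <= (st a :: pa) ++ (st b :: pb)} ->
  covering st W -> covering st reroute.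
Proof.
move=> sub cover v; have [i vi] := cover v.
have [eia|nia] := eqVneq i a; last have [eib|nib] := eqVneq i b;
  last by exists i; rewrite reroute_other.
all: have /sub : v \in (st a :: W a) ++ (st b :: W b)
  by rewrite mem_cat -?eia -?eib vi ?orbT.
all: rewrite mem_cat => /orP[va|vb]; first by exists a; rewrite reroute_a.
all: by exists b; rewrite reroute_b.
Qed.

Lemma slength_reroute :
  slength st reroute + (wlength (st a) (W a) + wlength (st b) (W b)) =
  slength st W + (wlength (st a) pa + wlength (st b) pb).
Proof.
rewrite /slength !(sum_pair _ nab) reroute_a reroute_b.
have -> : \sum_(i < k | (i != a) && (i != b)) wlength (st i) (reroute i) =
          \sum_(i < k | (i != a) && (i != b)) wlength (st i) (W i).
  by apply: eq_bigr => i /andP[nia nib]; rewrite reroute_other.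
lia.
Qed.

End Reroute.

Lemma opposite_traversals_same_robot (V : finType) (e : rel V) (k : nat)
  (st : 'I_k -> V) (W : 'I_k -> seq V) (x y : V) (a b : 'I_k) :
  optimal_covering e st W -> x != y ->
  traverses (st a) (W a) x y -> traverses (st b) (W b) y x -> a = b.
Proof.
move=> [walks cover opt] nxy /traverses_split[qa [ra [Wa lastA]]]
  /traverses_split[qb [rb [Wb lastB]]].
have [// | nab] := eqVneq a b; exfalso.
pose W' := reroute W a b (qa ++ rb) (qb ++ ra).
have := walks a; rewrite Wa is_walk_cat lastA is_walk_cons.
move=> /andP[walk_qa /andP[_ walk_ra]].
have := walks b; rewrite Wb is_walk_cat lastB is_walk_cons.
move=> /andP[walk_qb /andP[_ walk_rb]].
have walks' : is_strategy e st W'.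
  by apply: reroute_strategy; rewrite // is_walk_cat ?lastA ?lastB; apply/andP.
have cover' : covering st W'.
  apply: reroute_covering cover => // v.
  have xa : x \in st a :: qa by rewrite -lastA mem_last.
  have yb : y \in st b :: qb by rewrite -lastB mem_last.
  rewrite Wa Wb -!cat_cons !mem_cat.
  by case/orP=> /orP[->|]; rewrite ?orbT // in_cons => /orP[/eqP->|->];
    rewrite ?xa ?yb ?orbT.
have := opt W' walks' cover'.
have := slength_reroute st W (qa ++ rb) (qb ++ ra) nab.
rewrite Wa Wb (wlength_cat_cons _ _ lastA) (wlength_cat_cons _ _ lastB).
rewrite !wlength_cat lastA lastB nxy eq_sym nxy /= -/W'.
lia.
Qed.

Theorem lemma3 (V : finType) (e : rel V) (k : nat)
  (st : 'I_k -> V) (W : 'I_k -> seq V) (x y : V) :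
  is_tree e ->
  optimal_covering e st W ->
  e x y ->
  (exists i j : 'I_k, [/\ i != j,
      traverses (st i) (W i) x y || traverses (st i) (W i) y x &
      traverses (st j) (W j) x y || traverses (st j) (W j) y x]) ->
  (forall i : 'I_k, ~~ traverses (st i) (W i) y x) \/
  (forall i : 'I_k, ~~ traverses (st i) (W i) x y).
Proof.
move=> [[_ irr] _ _] opt exy [i [j [nij Ti Tj]]].
have nxy : x != y by apply: contraTneq exy => ->; rewrite irr.
have same := opposite_traversals_same_robot opt nxy.
case: (boolP [forall b, ~~ traverses (st b) (W b) y x]).
  by move/forallP; left.
move=> /forallPn[b /negPn Tb].
right=> c; apply/negP=> Tc.
have only_b d :
    traverses (st d) (W d) x y || traverses (st d) (W d) y x -> d = b.
  case/orP=> Td; first exact: same Td Tb.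
  by rewrite -(same _ _ Tc Td); exact: same Tc Tb.
by rewrite (only_b i Ti) (only_b j Tj) eqxx in nij.
Qed.
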